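(* Let $(\mathsf L,\mathsf R,\Delta)$ be an n.w.f.s. on $\mathcal{C}$, let $(f,s)\colon X\to Y$ and $(g,t)\colon Y\to Z$ be $\mathsf L$-maps, and let $(gf,u)$ be their composite, where $u=\pi_{gf}\circ E(E(1_X,g),1_Z)\circ E(s,1_Z)\circ t$. Then $(1_X,g)\colon f\to gf$ is a morphism of $\mathsf L$-maps $(f,s)\to(gf,u)$.
   Context: An n.w.f.s. is a functorial factorisation $(E,\lambda,\rho)$ ($E\colon\mathcal{C}^{\mathbf 2}\to\mathcal{C}$ on the arrow category, natural $\lambda\colon\mathrm{dom}\Rightarrow E$, $\rho\colon E\Rightarrow\mathrm{cod}$, $\rho_f\lambda_f=f$) with natural $\sigma_f\colon Ef\to E(\lambda_f)$, $\pi_f\colon E(\rho_f)\to Ef$ satisfying $\sigma_f\lambda_f=\lambda_{\lambda_f}$, $\rho_f\pi_f=\rho_{\rho_f}$, $\rho_{\lambda_f}\sigma_f=1$, $\pi_f\lambda_{\rho_f}=1$, $E(1_X,\rho_f)\sigma_f=1$, $\pi_fE(\lambda_f,1_Y)=1$, $E(1_X,\sigma_f)\sigma_f=\sigma_{\lambda_f}\sigma_f$, $\pi_fE(\pi_f,1_Y)=\pi_f\pi_{\rho_f}$, $\sigma_f\pi_f=\pi_{\lambda_f}E(\sigma_f,\pi_f)\sigma_{\rho_f}$. An $\mathsf L$-map is $(f,s)$ with $s\colon Y\to Ef$, $sf=\lambda_f$, $\rho_fs=1_Y$, $\sigma_fs=E(1_X,s)s$; a morphism $(h,k)\colon(f,s)\to(g',t')$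 is a commuting square with $t'k=E(h,k)s$. Here $E(s,1_Z)$ is $E$ applied to the square $(s,1_Z)\colon g\to g\rho_f$ and $E(1_X,g)$ to the square $(1_X,g)\colon f\to gf$. *)

Record Category := {
  ob :> Type;
  hom : ob -> ob -> Type;
  comp : forall a b c : ob, hom b c -> hom a b -> hom a c;
  idm : forall a : ob, hom a a;
  comp_idl : forall a b (f : hom a b), comp a b b (idm b) f = f;
  comp_idr : forall a b (f : hom a b), comp a a b f (idm a) = f;
  comp_assoc : forall a b c d (h : hom c d) (g : hom b c) (f : hom a b),
      comp a c d h (comp a b c g f) = comp a b d (comp b c d h g) f }.

Arguments hom {_} _ _.
Arguments comp {_ a b c} _ _.
Arguments idm {_} a.
Notation "g ⊚ f" := (comp g f) (at level 40, left associativity).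

Record Arr (C : Category) := mkArr { adom : C; acod : C; ar : hom adom acod }.
Arguments Arr : clear implicits.
Arguments mkArr {C adom acod} ar.
Arguments adom {C} _.
Arguments acod {C} _.
Arguments ar {C} _.

Record Square (C : Category) (f g : Arr C) := mkSq {
  sq_top : hom (adom f) (adom g);
  sq_bot : hom (acod f) (acod g);
  sq_comm : ar g ⊚ sq_top = sq_bot ⊚ ar f }.
Arguments Square {C} f g.
Arguments mkSq {C f g} sq_top sq_bot sq_comm.
Arguments sq_top {C f g} _.
Arguments sq_bot {C f g} _.
Arguments sq_comm {C f g} _.

Definition sq_id {C : Category} (f : Arr C) : Square f f.
Proof. refine (mkSq (idm _) (idm _) _).
  abstract (rewrite comp_idr, comp_idl; reflexivity). Defined.

Definition sq_comp {C : Category} {f g h : Arr C} (b : Square g h) (a : Square f g)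
  : Square f h.
Proof. refine (mkSq (sq_top b ⊚ sq_top a) (sq_bot b ⊚ sq_bot a) _).
  abstract (rewrite comp_assoc, (sq_comm b), <- comp_assoc, (sq_comm a),
            comp_assoc; reflexivity). Defined.

Record FF (C : Category) := {
  Eo : Arr C -> C;
  Em : forall f g : Arr C, Square f g -> hom (Eo f) (Eo g);
  Em_id : forall f, Em f f (sq_id f) = idm _;
  Em_comp : forall f g h (b : Square g h) (a : Square f g),
      Em f h (sq_comp b a) = Em g h b ⊚ Em f g a;
  lam : forall f, hom (adom f) (Eo f);
  rho : forall f, hom (Eo f) (acod f);
  lam_nat : forall f g (a : Square f g), Em f g a ⊚ lam f = lam g ⊚ sq_top a;
  rho_nat : forall f g (a : Square f g), rho g ⊚ Em f g a = sq_bot a ⊚ rho f;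
  rho_lam : forall f, rho f ⊚ lam f = ar f }.
Arguments Eo {C} _ _.
Arguments Em {C} _ {f g} _.
Arguments lam {C} _ _.
Arguments rho {C} _ _.

Definition lamA {C} (F : FF C) (f : Arr C) : Arr C := mkArr (lam F f).
Definition rhoA {C} (F : FF C) (f : Arr C) : Arr C := mkArr (rho F f).

Definition lamSq {C} (F : FF C) {f g : Arr C} (a : Square f g)
  : Square (lamA F f) (lamA F g).
Proof. refine (@mkSq C (lamA F f) (lamA F g) (sq_top a) (Em F a) _).
  abstract (exact (eq_sym (lam_nat _ F _ _ a))). Defined.

Definition rhoSq {C} (F : FF C) {f g : Arr C} (a : Square f g)
  : Square (rhoA F f) (rhoA F g).
Proof. refine (@mkSq C (rhoA F f) (rhoA F g) (Em F a) (sq_bot a) _).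
  abstract (exact (rho_nat _ F _ _ a)). Defined.

Definition sq_1rho {C} (F : FF C) (f : Arr C) : Square (lamA F f) f.
Proof. refine (@mkSq C (lamA F f) f (idm _) (rho F f) _).
  abstract (simpl; rewrite comp_idr, rho_lam; reflexivity). Defined.

Definition sq_lam1 {C} (F : FF C) (f : Arr C) : Square f (rhoA F f).
Proof. refine (@mkSq C f (rhoA F f) (lam F f) (idm _) _).
  abstract (simpl; rewrite comp_idl, rho_lam; reflexivity). Defined.

Definition sq_1sig {C} (F : FF C) (f : Arr C) (s : hom (Eo F f) (Eo F (lamA F f)))
  (H : s ⊚ lam F f = lam F (lamA F f)) : Square (lamA F f) (lamA F (lamA F f)).
Proof. refine (@mkSq C (lamA F f) (lamA F (lamA F f)) (idm _) s _).
  abstract (simpl; rewrite comp_idr; symmetry; exact H). Defined.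

Definition sq_pi1 {C} (F : FF C) (f : Arr C) (p : hom (Eo F (rhoA F f)) (Eo F f))
  (H : rho F f ⊚ p = rho F (rhoA F f)) : Square (rhoA F (rhoA F f)) (rhoA F f).
Proof. refine (@mkSq C (rhoA F (rhoA F f)) (rhoA F f) p (idm _) _).
  abstract (simpl; rewrite comp_idl; exact H). Defined.

Definition sq_sigpi {C} (F : FF C) (f : Arr C) (s : hom (Eo F f) (Eo F (lamA F f)))
  (p : hom (Eo F (rhoA F f)) (Eo F f))
  (H1 : rho F (lamA F f) ⊚ s = idm _) (H2 : p ⊚ lam F (rhoA F f) = idm _)
  : Square (lamA F (rhoA F f)) (rhoA F (lamA F f)).
Proof. refine (@mkSq C (lamA F (rhoA F f)) (rhoA F (lamA F f)) s p _).
  abstract (simpl in *; rewrite H1, H2; reflexivity). Defined.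

Record NWFS (C : Category) := {
  ff :> FF C;
  sig : forall f, hom (Eo ff f) (Eo ff (lamA ff f));
  pi : forall f, hom (Eo ff (rhoA ff f)) (Eo ff f);
  sig_nat : forall f g (a : Square f g), sig g ⊚ Em ff a = Em ff (lamSq ff a) ⊚ sig f;
  pi_nat : forall f g (a : Square f g), pi g ⊚ Em ff (rhoSq ff a) = Em ff a ⊚ pi f;
  sig_lam : forall f, sig f ⊚ lam ff f = lam ff (lamA ff f);
  rho_pi : forall f, rho ff f ⊚ pi f = rho ff (rhoA ff f);
  rho_sig : forall f, rho ff (lamA ff f) ⊚ sig f = idm _;
  pi_lam : forall f, pi f ⊚ lam ff (rhoA ff f) = idm _;
  counit_sig : forall f, Em ff (sq_1rho ff f) ⊚ sig f = idm _;
  pi_unit : forall f, pi f ⊚ Em ff (sq_lam1 ff f) = idm _;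
  sig_coassoc : forall f,
      Em ff (sq_1sig ff f (sig f) (sig_lam f)) ⊚ sig f = sig (lamA ff f) ⊚ sig f;
  pi_assoc : forall f,
      pi f ⊚ Em ff (sq_pi1 ff f (pi f) (rho_pi f)) = pi f ⊚ pi (rhoA ff f);
  distr : forall f,
      sig f ⊚ pi f =
      pi (lamA ff f) ⊚ Em ff (sq_sigpi ff f (sig f) (pi f) (rho_sig f) (pi_lam f))
        ⊚ sig (rhoA ff f) }.
Arguments sig {C} _ _.
Arguments pi {C} _ _.

Definition sq_1s {C} (F : FF C) (f : Arr C) (s : hom (acod f) (Eo F f))
  (H : s ⊚ ar f = lam F f) : Square f (lamA F f).
Proof. refine (@mkSq C f (lamA F f) (idm _) s _).
  abstract (simpl; rewrite comp_idr; symmetry; exact H). Defined.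

Record Lmap {C} (N : NWFS C) (f : Arr C) := {
  ls : hom (acod f) (Eo N f);
  ls_lam : ls ⊚ ar f = lam N f;
  ls_rho : rho N f ⊚ ls = idm _;
  ls_coalg : sig N f ⊚ ls = Em N (sq_1s N f ls ls_lam) ⊚ ls }.
Arguments ls {C N f} _.
Arguments ls_rho {C N f} _.

Definition is_Lmap_mor {C} (N : NWFS C) {f g : Arr C}
  (s : hom (acod f) (Eo N f)) (t : hom (acod g) (Eo N g)) (a : Square f g) : Prop :=
  t ⊚ sq_bot a = Em N a ⊚ s.

Definition sq_1g {C : Category} {X Y Z : C} (f : hom X Y) (g : hom Y Z)
  : Square (mkArr f) (mkArr (g ⊚ f)).
Proof. refine (@mkSq C (mkArr f) (mkArr (g ⊚ f)) (idm _) g _).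
  abstract (simpl; rewrite comp_idr; reflexivity). Defined.

Definition sq_s1 {C} (N : NWFS C) {X Y Z : C} (f : hom X Y) (g : hom Y Z)
  (s : hom Y (Eo N (mkArr f))) (H : rho N (mkArr f) ⊚ s = idm _)
  : Square (mkArr g) (mkArr (g ⊚ rho N (mkArr f))).
Proof. refine (@mkSq C (mkArr g) (mkArr (g ⊚ rho N (mkArr f))) s (idm _) _).
  abstract (simpl; rewrite <- comp_assoc; etransitivity; [apply f_equal; exact H|]; rewrite comp_idr, comp_idl; reflexivity).
Defined.

Definition sq_E1 {C} (N : NWFS C) {X Y Z : C} (f : hom X Y) (g : hom Y Z)
  : Square (mkArr (g ⊚ rho N (mkArr f))) (rhoA N (mkArr (g ⊚ f))).
Proof. refine (@mkSq C (mkArr (g ⊚ rho N (mkArr f))) (rhoA N (mkArr (g ⊚ f)))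
                 (Em N (sq_1g f g)) (idm _) _).
  abstract (simpl; rewrite comp_idl, rho_nat; reflexivity). Defined.

(* the coalgebra structure u of the composite L-map (g f, u):
   u = pi_{gf} . E(E(1_X,g),1_Z) . E(s,1_Z) . t *)
Definition Lcomp {C} (N : NWFS C) {X Y Z : C} {f : hom X Y} {g : hom Y Z}
  (s : Lmap N (mkArr f)) (t : Lmap N (mkArr g)) : hom Z (Eo N (mkArr (g ⊚ f))) :=
  pi N (mkArr (g ⊚ f)) ⊚ Em N (sq_E1 N f g)
    ⊚ Em N (sq_s1 N f g (ls s) (ls_rho s)) ⊚ ls t.

(** Precomposing [u] with [g] and using [t g = λ_g] leaves [π_{gf} E(b) λ_{gρ_f}]
    for the composite square [b = (E(1_X,g), 1_Z) ∘ (s, 1_Z)]; naturality of [λ]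
    and the unit law [π λ = 1] reduce this to the top edge [E(1_X,g) s] of [b]. *)


Lemma pi_Em_lam {C : Category} (N : NWFS C) (h k : Arr C) (a : Square h (rhoA N k)) :
  pi N k ⊚ Em N a ⊚ lam N h = sq_top a.
Proof.
  rewrite <- comp_assoc, (lam_nat _ N), comp_assoc.
  rewrite (pi_lam _ N), comp_idl.
  reflexivity.
Qed.

Theorem lemma6p16 (C : Category) (N : NWFS C) (X Y Z : C)
  (f : hom X Y) (g : hom Y Z) (s : Lmap N (mkArr f)) (t : Lmap N (mkArr g)) :
  @is_Lmap_mor C N (mkArr f) (mkArr (g ⊚ f)) (ls s) (Lcomp N s t) (sq_1g f g).
Proof.
  unfold is_Lmap_mor, Lcomp.
  pose proof (ls_lam _ _ t) as t_lam; simpl in t_lam.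
  simpl; rewrite <- comp_assoc, t_lam.
  rewrite <- (comp_assoc _ _ _ _ _ (pi N _)), <- (Em_comp _ N).
  exact (pi_Em_lam N _ _ (sq_comp (sq_E1 N f g) (sq_s1 N f g (ls s) (ls_rho s)))).
Qed.
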